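(* Let $\mathbb{K}$ be a positive commutative monoid, $R_1,\dots,R_m$ a collection of $\mathbb{K}$-relations and $k$ a positive integer. The following are equivalent: (1) the collection is $k$-wise consistent; (2) it is $k$-wise consistent up to some cover of $\mathbb{K}$; (3) it is weakly $k$-wise consistent up to some cover of $\mathbb{K}$; (4) it is very weakly $k$-wise consistent up to some covers of $\mathbb{K}$.
   Context: Positive: $p+q=0\Rightarrow p=q=0$. For a finite attribute set $X$ (attributes have domains), a $\mathbb{K}$-relation over $X$ is a map $R$ from $X$-tuples to $K$ with finite support $R'$; $t[Y]$ is restriction; marginals $R[Y](t)=\sum_{r\in R',r[Y]=t}R(r)$. With $R_i$ over $X_i$, the collection is $k$-wise consistent if for every $q\le k$ and $i_1,\dots,i_q\in[m]$ some relation $W$ over $X_{i_1}\cup\dots\cup X_{i_q}$ has $W[X_{i_j}]=R_{i_j}$ for all $j$; globally consistent means this for the whole chosen subcollection. A cover of $\mathbb{K}$ is a pair $(\mathbb{K}^*,h)$, $\mathbb{K}^*$ a positive commutative monoid and $h:\mathbb{K}^*\to\mathbb{K}$ a surjective homomorphism; an $h$-lift of $R$ is a $\mathbb{K}^*$-relation $R^*$ over the same attributes with $h\circ R^*=R$. $k$-wise consistent up to the cover: some $h$-lifts $R_1^*,\dots,R_m^*$ form a $k$-wise consistent collection. Weakly $k$-wise consistent up to the cover: for every $q\le k$ and $i_1,\dots,i_q\in[m]$ there exist $h$-lifts $R^*_{i_1},\dots,R^*_{i_q}$ of $R_{i_1},\dots,R_{i_q}$ forming a globally consistent collection. Very weakly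 $k$-wise consistent up to some covers: for every $q\le k$ and $i_1,\dots,i_q\in[m]$ there exist a cover $h:\mathbb{K}^*\to\mathbb{K}$ (depending on $i_1,\dots,i_q$) and $h$-lifts $R^*_{i_1},\dots,R^*_{i_q}$ forming a globally consistent collection. *)

From HB Require Import structures.
From mathcomp Require Import all_boot all_order all_algebra.
From mathcomp Require Import finmap.
Set Implicit Arguments. Unset Strict Implicit. Unset Printing Implicit Defensive.
Import GRing.Theory.
Local Open Scope ring_scope.

Definition positive_monoid (K : nmodType) : Prop :=
  forall p q : K, p + q = 0 -> p = 0 /\ q = 0.

Section Relations.
Variables (A : finType) (Dom : A -> choiceType).

(* A (partial) tuple: assigns [Some v] (v in Dom a) to the attributes it is
   defined on and [None] elsewhere.  An X-tuple is defined exactly on X. *)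
Definition tup := {dffun forall a : A, option (Dom a)}.

Definition is_tuple_over (X : {set A}) (t : tup) : bool :=
  [forall a, (t a != None) == (a \in X)].

Definition restr (Y : {set A}) (t : tup) : tup :=
  [ffun a => if a \in Y then t a else None].

Definition krel (K : nmodType) := {fsfun tup -> K with 0}.

Definition rel_over (K : nmodType) (X : {set A}) (R : krel K) : Prop :=
  forall t, R t != 0 -> is_tuple_over X t.

Definition marg (K : nmodType) (Y : {set A}) (R : krel K) (t : tup) : K :=
  \sum_(r <- finsupp R | restr Y r == t) R r.

Definition glob_consistent (K : nmodType) (m : nat) (X : 'I_m -> {set A})
    (R : 'I_m -> krel K) (s : seq 'I_m) : Prop :=
  exists W : krel K, rel_over (\bigcup_(i <- s) X i) W /\
    forall i, i \in s -> forall t, marg (X i) W t = R i t.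

Definition kwise_consistent (K : nmodType) (m : nat) (X : 'I_m -> {set A})
    (R : 'I_m -> krel K) (k : nat) : Prop :=
  forall s : seq 'I_m, (size s <= k)%N -> glob_consistent X R s.

Definition is_cover (K Ks : nmodType) (h : Ks -> K) : Prop :=
  positive_monoid Ks /\ nmod_morphism h /\ (forall y : K, exists x : Ks, h x = y).

Definition is_lift (K Ks : nmodType) (h : Ks -> K) (X : {set A})
    (R : krel K) (Rs : krel Ks) : Prop :=
  rel_over X Rs /\ forall t, h (Rs t) = R t.

Definition kwise_consistent_up_to_cover (K : nmodType) (m : nat)
    (X : 'I_m -> {set A}) (R : 'I_m -> krel K) (k : nat) : Prop :=
  exists (Ks : nmodType) (h : Ks -> K), is_cover h /\
    exists Rs : 'I_m -> krel Ks,
      (forall i, is_lift h (X i) (R i) (Rs i)) /\ kwise_consistent X Rs k.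

Definition weakly_kwise_consistent_up_to_cover (K : nmodType) (m : nat)
    (X : 'I_m -> {set A}) (R : 'I_m -> krel K) (k : nat) : Prop :=
  exists (Ks : nmodType) (h : Ks -> K), is_cover h /\
    forall s : seq 'I_m, (size s <= k)%N ->
      exists Rs : 'I_m -> krel Ks,
        (forall i, i \in s -> is_lift h (X i) (R i) (Rs i)) /\
        glob_consistent X Rs s.

Definition very_weakly_kwise_consistent_up_to_covers (K : nmodType) (m : nat)
    (X : 'I_m -> {set A}) (R : 'I_m -> krel K) (k : nat) : Prop :=
  forall s : seq 'I_m, (size s <= k)%N ->
    exists (Ks : nmodType) (h : Ks -> K), is_cover h /\
      exists Rs : 'I_m -> krel Ks,
        (forall i, i \in s -> is_lift h (X i) (R i) (Rs i)) /\
        glob_consistent X Rs s.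

End Relations.

(* (1) => (2) with the identity cover, and (2) => (3) => (4) only weaken the
   quantifiers.  For (4) => (1), push a global witness over K* forward along
   the cover h: marginals are finite sums and h is additive, so the image of
   the witness has the images of the lifts, i.e. the R_i, as marginals. *)

From HB Require Import structures.
From mathcomp Require Import all_boot all_order all_algebra.
From mathcomp Require Import finmap.
Set Implicit Arguments. Unset Strict Implicit. Unset Printing Implicit Defensive.
Import GRing.Theory.
Local Open Scope fset_scope.

Lemma id_is_cover (K : nmodType) : positive_monoid K -> is_cover (@id K).
Proof. by move=> HK; split=> //; split=> // y; exists y. Qed.

Section MapKrel.
Variables (A : finType) (Dom : A -> choiceType) (K Ks : nmodType) (h : Ks -> K).
Hypothesis h_morph : nmod_morphism h.

Lemma marg_fsubset (L : nmodType) Y (W : krel Dom L) (S : {fset tup Dom}) t :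
  finsupp W `<=` S ->
  marg Y W t = (\sum_(r <- S) (if restr Y r == t then W r else 0))%R.
Proof.
move=> suppW; rewrite /marg big_mkcond /=; apply: big_fset_incl => // r _ rNW.
by rewrite (fsfun_dflt rNW); case: ifP.
Qed.

Definition map_krel (W : krel Dom Ks) : krel Dom K :=
  [fsfun r in finsupp W => h (W r)].

Lemma map_krelE W r : map_krel W r = h (W r).
Proof.
rewrite /map_krel fsfun_fun; case: ifP => // /negbT rNW.
by rewrite (fsfun_dflt rNW) h_morph.1.
Qed.

Lemma rel_over_map_krel Y W : rel_over Y W -> rel_over Y (map_krel W).
Proof.
move=> WY t; rewrite map_krelE => hWt; apply: WY.
by apply: contraNneq hWt => ->; rewrite h_morph.1.
Qed.

Lemma marg_map_krel Y W t : marg Y (map_krel W) t = h (marg Y W t).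
Proof.
pose S := finsupp (map_krel W) `|` finsupp W.
rewrite (@marg_fsubset _ _ _ S) ?fsubsetUl // (@marg_fsubset _ _ _ S) ?fsubsetUr //.
rewrite (big_morph h h_morph.2 h_morph.1); apply: eq_bigr => r _.
by case: ifP; rewrite ?map_krelE ?h_morph.1.
Qed.

Lemma glob_consistent_map m (X : 'I_m -> {set A}) (R : 'I_m -> krel Dom K)
    (Rs : 'I_m -> krel Dom Ks) (s : seq 'I_m) :
  (forall i, i \in s -> forall t, h (Rs i t) = R i t) ->
  glob_consistent X Rs s -> glob_consistent X R s.
Proof.
move=> hRs [W [WX margW]]; exists (map_krel W); split.
  exact: rel_over_map_krel.
by move=> i si t; rewrite marg_map_krel margW // hRs.
Qed.

End MapKrel.

Theorem proposition43 (A : finType) (Dom : A -> choiceType) (K : nmodType)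
    (HK : positive_monoid K) (m : nat) (X : 'I_m -> {set A})
    (R : 'I_m -> krel Dom K) (HR : forall i, rel_over (X i) (R i))
    (k : nat) (Hk : (0 < k)%N) :
  [<-> kwise_consistent X R k;
       kwise_consistent_up_to_cover X R k;
       weakly_kwise_consistent_up_to_cover X R k;
       very_weakly_kwise_consistent_up_to_covers X R k].
Proof.
tfae.
- move=> consR; exists K, id; split; first exact: id_is_cover.
  by exists R.
- case=> Ks [h [cover_h [Rs [liftRs consRs]]]]; exists Ks, h; split=> // s sk.
  by exists Rs; split=> [i _|]; [apply: liftRs | apply: consRs].
- by case=> Ks [h [cover_h consRs]] s sk; exists Ks, h; split=> //; apply: consRs.
- move=> consR s sk; have [Ks [h [[_ [h_morph _]] [Rs [liftRs consRs]]]]] := consR s sk.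
  by apply: (glob_consistent_map h_morph _ consRs) => i si t; case: (liftRs i si).
Qed.
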